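(* There is no $\mathcal{R}$-commutative T2R semigroup.
   Context: A semigroup $S$ is $\mathcal{R}$-commutative if for every $s,t\in S$ there is an element $r\in S^1$ (where $S^1$ is $S$ with an identity adjoined) such that $st=tsr$. A semigroup $S$ is a $\Delta$-semigroup if the lattice of all congruences of $S$ is a chain with respect to inclusion. A semigroup $N$ with zero $0$ is nil if every element has some power equal to $0$; non-trivial means having more than one element. A T2R semigroup is a $\Delta$-semigroup $S$ which is the disjoint union of a non-trivial nil ideal $S_0$ (with zero $0$, which is then the zero of $S$) and a subsemigroup $S_1=\{u,v\}$, $u\neq v$, which is a right zero semigroup ($xy=y$ for $x,y\in S_1$). *)

Definition associative {S : Type} (mul : S -> S -> S) : Prop :=
  forall x y z, mul x (mul y z) = mul (mul x y) z.

(* Multiplication by an element of S^1 = S with identity adjoined,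
   the adjoined identity being [None]. *)
Definition mul1 {S : Type} (mul : S -> S -> S) (x : S) (r : option S) : S :=
  match r with None => x | Some r' => mul x r' end.

Definition R_commutative {S : Type} (mul : S -> S -> S) : Prop :=
  forall s t : S, exists r : option S, mul s t = mul1 mul (mul t s) r.

Definition congruence {S : Type} (mul : S -> S -> S) (c : S -> S -> Prop) : Prop :=
  (forall x, c x x) /\
  (forall x y, c x y -> c y x) /\
  (forall x y z, c x y -> c y z -> c x z) /\
  (forall x y z, c x y -> c (mul z x) (mul z y)) /\
  (forall x y z, c x y -> c (mul x z) (mul y z)).

Definition Delta_semigroup {S : Type} (mul : S -> S -> S) : Prop :=
  forall c1 c2 : S -> S -> Prop,
    congruence mul c1 -> congruence mul c2 ->
    (forall x y, c1 x y -> c2 x y) \/ (forall x y, c2 x y -> c1 x y).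

(* Positive powers: spow mul x n = x^(n+1). *)
Fixpoint spow {S : Type} (mul : S -> S -> S) (x : S) (n : nat) : S :=
  match n with O => x | S n' => mul (spow mul x n') x end.

Definition T2R {S : Type} (mul : S -> S -> S) : Prop :=
  Delta_semigroup mul /\
  exists (S0 : S -> Prop) (z u v : S),
    (forall x y, S0 x -> S0 (mul x y) /\ S0 (mul y x)) /\
    S0 z /\ (forall x, S0 x -> mul z x = z /\ mul x z = z) /\
    (forall x, S0 x -> exists n, spow mul x n = z) /\
    (exists x, S0 x /\ x <> z) /\
    u <> v /\ ~ S0 u /\ ~ S0 v /\
    (forall x, S0 x \/ x = u \/ x = v) /\
    mul u u = u /\ mul u v = v /\ mul v u = u /\ mul v v = v.

From Stdlib Require Import Classical.

(* Let S = S0 ∪ {u, v} be an R-commutative T2R semigroup with zero z.  The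
   Rees congruence of the ideal S0 is compared with a second congruence, and
   in either case the two are incomparable, contradicting the Δ-property.
   The second congruence depends on whether the ideal T = S0 u S^1 exhausts S0:
   - if some b ∈ S0 lies outside T, take the congruence whose classes are T,
     {u, v} and singletons: it relates u, v (not related by the Rees
     congruence) but not b, z (related by it);
   - if S0 ⊆ T, take the kernel of the right regular representation,
     x θ y iff xw = yw for all w.  R-commutativity and nilpotency give
     (w x) u = x u for w ∈ {u, v}, x ∈ S0, whence u θ v; and S0 cannot be
     collapsed by θ, since then y u = z for all y ∈ S0 and so T = {z}. *)

Section Semigroups.

Variables (S : Type) (mul : S -> S -> S).
Hypothesis assoc : associative mul.

Lemma fixed_by_powers (p e : S) :
  p = mul p e -> forall n, p = mul p (spow mul e n).
Proof.
  intros Hpe n; induction n as [|n IH]; simpl.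
  - exact Hpe.
  - rewrite assoc, <- IH; exact Hpe.
Qed.

Definition rees (I : S -> Prop) (x y : S) : Prop := x = y \/ (I x /\ I y).

Lemma rees_congruence (I : S -> Prop) :
  (forall x y, I x -> I (mul x y) /\ I (mul y x)) -> congruence mul (rees I).
Proof.
  intros HI; unfold rees; split; [|split; [|split; [|split]]].
  - intros x; left; reflexivity.
  - intros x y [E | [Hx Hy]]; [left | right]; auto.
  - intros x y w [-> | [Hx Hy]] [-> | [Hy' Hw]]; auto.
  - intros x y w [-> | [Hx Hy]]; [left; reflexivity | right].
    split; [apply (HI x w Hx) | apply (HI y w Hy)].
  - intros x y w [-> | [Hx Hy]]; [left; reflexivity | right].
    split; [apply (HI x w Hx) | apply (HI y w Hy)].
Qed.

Definition same_right_action (x y : S) : Prop := forall w, mul x w = mul y w.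

Lemma same_right_action_congruence : congruence mul same_right_action.
Proof.
  unfold same_right_action; split; [|split; [|split; [|split]]].
  - reflexivity.
  - intros x y H w; auto.
  - intros x y t H1 H2 w; rewrite H1; auto.
  - intros x y t H w; rewrite <- !assoc, H; reflexivity.
  - intros x y t H w; rewrite <- !assoc, H; reflexivity.
Qed.

End Semigroups.

Section T2R_structure.

Variables (S : Type) (mul : S -> S -> S).
Hypothesis assoc : associative mul.
Hypothesis Rcomm : R_commutative mul.
Variables (S0 : S -> Prop) (z u v : S).
Hypothesis S0_ideal : forall x y, S0 x -> S0 (mul x y) /\ S0 (mul y x).
Hypothesis S0_z : S0 z.
Hypothesis z_zero : forall x, S0 x -> mul z x = z /\ mul x z = z.
Hypothesis S0_nil : forall x, S0 x -> exists n, spow mul x n = z.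
Hypothesis u_neq_v : u <> v.
Hypothesis u_notin_S0 : ~ S0 u.
Hypothesis v_notin_S0 : ~ S0 v.
Hypothesis S_cover : forall x, S0 x \/ x = u \/ x = v.
Hypotheses (uu : mul u u = u) (uv : mul u v = v) (vu : mul v u = u) (vv : mul v v = v).

Definition in_S1 (x : S) : Prop := x = u \/ x = v.

Lemma S1_right_zero (x y : S) : in_S1 x -> in_S1 y -> mul x y = y.
Proof. intros [-> | ->] [-> | ->]; assumption. Qed.

Lemma S1_notin_S0 (x : S) : in_S1 x -> ~ S0 x.
Proof. intros [-> | ->]; assumption. Qed.

Lemma zero_left (r : S) : mul z r = z.
Proof.
  assert (Hzr : S0 (mul z r)) by apply (S0_ideal z r S0_z).
  transitivity (mul (mul z z) r).
  - rewrite (proj1 (z_zero z S0_z)); reflexivity.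
  - rewrite <- assoc; exact (proj1 (z_zero _ Hzr)).
Qed.

Lemma mul1_zero (r : option S) : mul1 mul z r = z.
Proof. destruct r; simpl; [apply zero_left | reflexivity]. Qed.

Lemma nil_fixed_is_zero (p e : S) : S0 p -> S0 e -> p = mul p e -> p = z.
Proof.
  intros Hp He Hpe; destruct (S0_nil e He) as [n Hn].
  rewrite (fixed_by_powers S mul assoc p e Hpe n), Hn.
  exact (proj2 (z_zero p Hp)).
Qed.

(* Write w x = x w r by R-commutativity: if r ∈ S0 then, using R-commutativity
   once more, x w is fixed by an element of S0, hence zero; otherwise r u = u. *)
Lemma S1_left_absorbed (w x : S) : in_S1 w -> S0 x -> mul (mul w x) u = mul x u.
Proof.
  intros Hw Hx.
  assert (Hwu : mul w u = u) by (apply S1_right_zero; [assumption | left; reflexivity]).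
  assert (Hxw : S0 (mul x w)) by apply (S0_ideal x w Hx).
  destruct (Rcomm w x) as [r1 E1].
  destruct r1 as [y|]; simpl in E1.
  - destruct (S_cover y) as [Hy | Hy].
    + assert (xw_zero : mul x w = z).
      { destruct (Rcomm x w) as [[y2|] E2]; simpl in E2.
        - apply (nil_fixed_is_zero _ (mul y y2) Hxw (proj1 (S0_ideal y y2 Hy))).
          rewrite assoc, <- E1; exact E2.
        - apply (nil_fixed_is_zero _ y Hxw Hy); rewrite <- E1; exact E2. }
      rewrite E1, xw_zero, !zero_left, <- Hwu, assoc, xw_zero, zero_left.
      reflexivity.
    + rewrite E1, <- (assoc (mul x w) y u), (S1_right_zero y u Hy (or_introl eq_refl)).
      rewrite <- assoc, Hwu; reflexivity.
  - rewrite E1, <- assoc, Hwu; reflexivity.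
Qed.

Definition T (x : S) : Prop := exists y r, S0 y /\ x = mul1 mul (mul y u) r.

Lemma T_in_S0 (x : S) : T x -> S0 x.
Proof.
  intros [y [r [Hy ->]]].
  assert (Hyu : S0 (mul y u)) by apply (S0_ideal y u Hy).
  destruct r as [r|]; simpl; [apply (S0_ideal _ r Hyu) | exact Hyu].
Qed.

Lemma T_right (x w : S) : T x -> T (mul x w).
Proof.
  intros [y [[r|] [Hy ->]]]; exists y; simpl.
  - exists (Some (mul r w)); split; [assumption | simpl; rewrite assoc; reflexivity].
  - exists (Some w); split; [assumption | reflexivity].
Qed.

Lemma T_left (x w : S) : T x -> T (mul w x).
Proof.
  intros [y [r [Hy ->]]]; exists (mul w y), r; split.
  - apply S0_ideal; assumption.
  - destruct r; simpl; rewrite !assoc; reflexivity.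
Qed.

Lemma T_mul1 (x : S) (r : option S) : T x -> T (mul1 mul x r).
Proof. destruct r; simpl; auto using T_right. Qed.

Lemma T_zero : T z.
Proof. exists z, None; split; [assumption | simpl; rewrite zero_left; reflexivity]. Qed.

Lemma T_S0_S1 (y w : S) : S0 y -> in_S1 w -> T (mul y w).
Proof.
  intros Hy [-> | ->].
  - exists y, None; split; [assumption | reflexivity].
  - exists y, (Some v); split; [assumption | simpl; rewrite <- assoc, uv; reflexivity].
Qed.

Lemma T_S1_S0 (w y : S) : in_S1 w -> S0 y -> T (mul w y).
Proof.
  intros Hw Hy; destruct (Rcomm w y) as [r E]; rewrite E.
  apply T_mul1, T_S0_S1; assumption.
Qed.

Definition rees_S0 : S -> S -> Prop := rees S S0.

Definition collapse_T_S1 (x y : S) : Prop :=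
  x = y \/ (in_S1 x /\ in_S1 y) \/ (T x /\ T y).

Lemma collapse_T_S1_congruence : congruence mul collapse_T_S1.
Proof.
  assert (disjoint : forall x, T x -> in_S1 x -> False)
    by (intros x Hx H1; exact (S1_notin_S0 x H1 (T_in_S0 x Hx))).
  unfold collapse_T_S1; split; [|split; [|split; [|split]]].
  - intros x; left; reflexivity.
  - intros x y [E | [[Hx Hy] | [Hx Hy]]]; auto.
  - intros x y w [<- | [[Hx Hy] | [Hx Hy]]] [<- | [[Hy' Hw] | [Hy' Hw]]]; auto;
      exfalso; eauto.
  - intros x y w [<- | [[Hx Hy] | [Hx Hy]]]; auto using T_left.
    destruct (S_cover w) as [Hw | Hw].
    + right; right; split; apply T_S0_S1; assumption.
    + right; left; rewrite !S1_right_zero by assumption; split; assumption.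
  - intros x y w [<- | [[Hx Hy] | [Hx Hy]]]; auto using T_right.
    destruct (S_cover w) as [Hw | Hw].
    + right; right; split; apply T_S1_S0; assumption.
    + left; rewrite !S1_right_zero by assumption; reflexivity.
Qed.

Lemma not_Delta_when_T_small :
  Delta_semigroup mul -> (exists b, S0 b /\ ~ T b) -> False.
Proof.
  intros Delta [b [Hb HbT]].
  destruct (Delta rees_S0 collapse_T_S1 (rees_congruence S mul S0 S0_ideal)
                  collapse_T_S1_congruence) as [Inc | Inc].
  - assert (Hbz : collapse_T_S1 b z) by (apply Inc; right; split; assumption).
    destruct Hbz as [-> | [[H1 _] | [HT _]]].
    + exact (HbT T_zero).
    + exact (S1_notin_S0 b H1 Hb).
    + exact (HbT HT).
  - assert (Huv : rees_S0 u v) by (apply Inc; right; left; split; [left | right]; reflexivity).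
    destruct Huv as [E | [Hu _]]; contradiction.
Qed.

Lemma u_v_same_right_action :
  (forall b, S0 b -> T b) -> same_right_action S mul u v.
Proof.
  intros HT w; destruct (S_cover w) as [Hw | Hw].
  - destruct (HT w Hw) as [y [r [Hy ->]]].
    destruct r; simpl; rewrite !assoc, !S1_left_absorbed; auto; (left + right); reflexivity.
  - rewrite !S1_right_zero by (auto; (left + right); reflexivity); reflexivity.
Qed.

Lemma not_Delta_when_T_large :
  Delta_semigroup mul -> (exists a, S0 a /\ a <> z) -> (forall b, S0 b -> T b) -> False.
Proof.
  intros Delta [a [Ha Haz]] HT.
  destruct (Delta rees_S0 (same_right_action S mul) (rees_congruence S mul S0 S0_ideal)
                  (same_right_action_congruence S mul assoc)) as [Inc | Inc].
  - destruct (HT a Ha) as [y [r [Hy Ea]]].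
    assert (Hyu : mul y u = z)
      by (rewrite (Inc y z (or_intror (conj Hy S0_z)) u); apply zero_left).
    apply Haz; rewrite Ea, Hyu; apply mul1_zero.
  - destruct (Inc u v (u_v_same_right_action HT)) as [E | [Hu _]]; contradiction.
Qed.

End T2R_structure.

Theorem mainTheorem9 (S : Type) (mul : S -> S -> S) :
  associative mul -> R_commutative mul -> ~ T2R mul.
Proof.
  intros assoc Rcomm [Delta [S0 [z [u [v H]]]]].
  destruct H as (S0_ideal & S0_z & z_zero & S0_nil & nontrivial & u_neq_v
                 & u_notin & v_notin & cover & uu & uv & vu & vv).
  destruct (classic (exists b, S0 b /\ ~ T S mul S0 u b)) as [T_small | T_large].
  - apply (not_Delta_when_T_small S mul assoc Rcomm S0 z u v); assumption.
  - apply (not_Delta_when_T_large S mul assoc Rcomm S0 z u v); try assumption.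
    intros b Hb; apply NNPP; intros HbT; apply T_large; exists b; split; assumption.
Qed.
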